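(* Let $T>0$, $\omega_p=\frac{\pi}{2T}$, $\omega_c>0$, $A_u>0$, $\tau\in\mathbb{R}$ and $\varphi_c\in\mathbb{R}$, and let $(\beta^I_m)_{m\in\mathbb{Z}},(\beta^Q_m)_{m\in\mathbb{Z}}$ be sequences in $\{-1,+1\}$. Define $$b_I(t)=\sum_{m=-\infty}^{\infty}\beta^I_m\,\Pi\!\left(\frac{t-2mT}{2T}\right),\qquad b_Q(t)=\sum_{m=-\infty}^{\infty}\beta^Q_m\,\Pi\!\left(\frac{t-(2m+1)T}{2T}\right),$$ where $\Pi(x)=1$ for $|x|<\tfrac12$, $\Pi(x)=\tfrac12$ for $|x|=\tfrac12$, $\Pi(x)=0$ for $|x|>\tfrac12$, and the interfering MSK signal $$u(t)=b_I(t-\tau)\cos\omega_p(t-\tau)\cos(\omega_c t+\varphi_c)+b_Q(t-\tau)\sin\omega_p(t-\tau)\sin(\omega_c t+\varphi_c).$$ Let $\phi_I(t)=\frac{2}{T}\cos\omega_p t\cos\omega_c t$, and for $k\in\mathbb{Z}$ let $$\Lambda^I_u(k)=\int_{(2k-1)T}^{(2k+1)T}\mathrm{LP}\big[A_u\,u(t)\,\phi_I(t)\big]\,dt,$$ where $\mathrm{LP}$ denotes ideal low-pass filtering that discards all components at carrier frequency $2\omega_c$ (i.e., after expanding the product by product-to-sum identities, all terms containing $\cos(2\omega_c t+\cdot)$ or $\sin(2\omega_c t+\cdot)$ are dropped). Set $\varphi_p=\omega_p\tau$, $k'=k-\lfloor \tau/2T\rfloor$, $\underline{\tau}=\tau-2\lfloor\tau/2T\rfloor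 T\in[0,2T)$, $k^{Q\prime}=k-\lfloor(\tau+T)/2T\rfloor$, and $\underline{\tau^Q}=\tau+T-2\lfloor(\tau+T)/2T\rfloor T\in[0,2T)$. Then $$\Lambda^I_u(k)=\frac{A_u}{2T}\Big\{\cos\varphi_c\Big[\cos\varphi_p\big(\underline{\tau}\,\beta^I_{k'-1}+(2T-\underline{\tau})\,\beta^I_{k'}\big)-\frac{2T}{\pi}\sin\varphi_p\big(\beta^I_{k'-1}-\beta^I_{k'}\big)\Big]$$ $$\qquad-\sin\varphi_c\Big[\sin\varphi_p\big(\underline{\tau^Q}\,\beta^Q_{k^{Q\prime}-1}+(2T-\underline{\tau^Q})\,\beta^Q_{k^{Q\prime}}\big)+\frac{2T}{\pi}\cos\varphi_p\big(\beta^Q_{k^{Q\prime}-1}-\beta^Q_{k^{Q\prime}}\big)\Big]\Big\}.$$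
   Context: This is the contribution of an interfering, minimum-shift-keying (MSK) modulated signal to the in-phase soft-bit decision variable of a matched-filter MSK demodulator synchronized to a different signal. $2T$ is the bit duration, $\omega_c$ the carrier angular frequency, $\tau$ the time offset of the interferer (positive means delayed), $\varphi_c$ its carrier phase offset, $A_u$ its received amplitude, and $\beta^I_m,\beta^Q_m$ its in-phase and quadrature information bits; the quadrature bit stream is staggered by $T$ relative to the in-phase one. *)

From Stdlib Require Import Reals Lra ZArith.
From Coquelicot Require Import Coquelicot.
Open Scope R_scope.

Definition rect (x : R) : R :=
  match Rlt_dec (Rabs x) (1/2) with
  | left _ => 1
  | right _ => if Req_EM_T (Rabs x) (1/2) then 1/2 else 0
  end.

Definition zsum (f : Z -> R) : R :=
  Series (fun n : nat => f (Z.of_nat n)) + Series (fun n : nat => f (- Z.of_nat (S n))%Z).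

Definition floorZ (x : R) : Z := Int_part x.

Definition bI (T : R) (betaI : Z -> R) (t : R) : R :=
  zsum (fun m => betaI m * rect ((t - 2 * IZR m * T) / (2 * T))).
Definition bQ (T : R) (betaQ : Z -> R) (t : R) : R :=
  zsum (fun m => betaQ m * rect ((t - (2 * IZR m + 1) * T) / (2 * T))).

Definition omega_p (T : R) : R := PI / (2 * T).

Definition msk_u (T wc tau phic : R) (betaI betaQ : Z -> R) (t : R) : R :=
  bI T betaI (t - tau) * cos (omega_p T * (t - tau)) * cos (wc * t + phic)
  + bQ T betaQ (t - tau) * sin (omega_p T * (t - tau)) * sin (wc * t + phic).

Definition phiI (T wc : R) (t : R) : R := 2 / T * cos (omega_p T * t) * cos (wc * t).

(* Product-to-sum expansion of Au * u(t) * phiI(t):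
   cos(wc t + phic) cos(wc t) = (cos phic + cos(2 wc t + phic))/2,
   sin(wc t + phic) cos(wc t) = (sin phic + sin(2 wc t + phic))/2.
   LP keeps the baseband part and discards the 2wc part. *)
Definition lp_part (T wc Au tau phic : R) (betaI betaQ : Z -> R) (t : R) : R :=
  Au * (2 / T) * cos (omega_p T * t) *
  (bI T betaI (t - tau) * cos (omega_p T * (t - tau)) * (cos phic / 2)
   + bQ T betaQ (t - tau) * sin (omega_p T * (t - tau)) * (sin phic / 2)).

Definition hf_part (T wc Au tau phic : R) (betaI betaQ : Z -> R) (t : R) : R :=
  Au * (2 / T) * cos (omega_p T * t) *
  (bI T betaI (t - tau) * cos (omega_p T * (t - tau)) * (cos (2 * wc * t + phic) / 2)
   + bQ T betaQ (t - tau) * sin (omega_p T * (t - tau)) * (sin (2 * wc * t + phic) / 2)).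

Lemma product_split T wc Au tau phic betaI betaQ t :
  Au * msk_u T wc tau phic betaI betaQ t * phiI T wc t
  = lp_part T wc Au tau phic betaI betaQ t + hf_part T wc Au tau phic betaI betaQ t.
Proof.
  unfold msk_u, phiI, lp_part, hf_part.
  assert (E2c : cos (2 * wc * t + phic) = cos (wc * t + phic) * cos (wc * t) - sin (wc * t + phic) * sin (wc * t)).
  { rewrite <- cos_plus. f_equal. ring. }
  assert (E2s : sin (2 * wc * t + phic) = sin (wc * t + phic) * cos (wc * t) + cos (wc * t + phic) * sin (wc * t)).
  { rewrite <- sin_plus. f_equal. ring. }
  assert (Ec : cos phic = cos (wc * t + phic) * cos (wc * t) + sin (wc * t + phic) * sin (wc * t)).
  { rewrite <- cos_minus. f_equal. ring. }
  assert (Es : sin phic = sin (wc * t + phic) * cos (wc * t) - cos (wc * t + phic) * sin (wc * t)).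
  { rewrite <- sin_minus. f_equal. ring. }
  rewrite E2c, E2s, Ec, Es.
  set (c := cos (wc * t + phic)) in *. set (s := sin (wc * t + phic)) in *.
  set (c0 := cos (wc * t)) in *. set (s0 := sin (wc * t)) in *.
  set (BI := bI T betaI (t - tau)). set (BQ := bQ T betaQ (t - tau)).
  set (a := cos (omega_p T * t)). set (ci := cos (omega_p T * (t - tau))).
  set (si := sin (omega_p T * (t - tau))).
  unfold Rdiv. replace (/ 2) with (1 * / 2) by ring. set (h := / 2). assert (Eh : h + h = 1) by (unfold h; lra). transitivity (Au * (BI * ci * c + BQ * si * s) * (2 * / T * a * c0) * (h + h)); [rewrite Eh; ring | ring].
Qed.

Definition LP_prod (T wc Au tau phic : R) (betaI betaQ : Z -> R) (t : R) : R :=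
  lp_part T wc Au tau phic betaI betaQ t.

Definition LambdaI (T wc Au tau phic : R) (betaI betaQ : Z -> R) (k : Z) : R :=
  RInt (LP_prod T wc Au tau phic betaI betaQ) ((2 * IZR k - 1) * T) ((2 * IZR k + 1) * T).

From Stdlib Require Import Reals Lra Lia ZArith.
From Coquelicot Require Import Coquelicot.
Open Scope R_scope.

(* After low-pass filtering, Lambda^I_u(k) is a combination of two correlations over the
   window [(2k-1)T, (2k+1)T]: the delayed in-phase bit stream against
   cos(w t) cos(w (t - tau)) = (cos(w tau) + cos(2 w t - w tau))/2, and the quadrature
   one against cos(w t) sin(w (t - tau)).  Writing tau = 2nT + u with 0 <= u < 2T, the
   delayed in-phase stream has a single transition in the window, at (2k-1)T + u, from
   beta_(k-n-1) to beta_(k-n); at the window ends and at the transition the phase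
   2 w t - w tau is an odd multiple of PI -/+ w tau, which gives the sin(w tau) terms.
   The quadrature stream is the in-phase stream delayed by T, and
   sin(w (t - tau)) = cos(w (t - (tau + T))), so the quadrature correlation is the
   in-phase one for the delay tau + T, whose phase is w tau + PI/2. *)

Lemma is_series_first (x : R) :
  is_series (fun k : nat => match k with O => x | S _ => 0 end) x.
Proof.
  apply filterlim_ext with (fun _ => x); [|apply filterlim_const].
  intro n; induction n as [|n IH]; [now rewrite sum_O|].
  rewrite sum_Sn, <- IH; simpl; change (x = x + 0); ring.
Qed.

Lemma Series_single (a : nat -> R) (N : nat) :
  (forall n, n <> N -> a n = 0) -> Series a = a N.
Proof.
  intros Ha; rewrite (Series_incr_n_aux a N) by (intros k Hk; apply Ha; lia).
  rewrite <- (is_series_unique _ _ (is_series_first (a N))).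
  apply Series_ext; intros [|n]; [now rewrite Nat.add_0_r | apply Ha; lia].
Qed.

Lemma Series_zero (a : nat -> R) : (forall n, a n = 0) -> Series a = 0.
Proof. intros Ha; rewrite (Series_single a 0); auto. Qed.

Lemma zsum_ext (f g : Z -> R) : (forall m, f m = g m) -> zsum f = zsum g.
Proof. intros Hfg; unfold zsum; rewrite !(Series_ext _ _ (fun n => Hfg _)); reflexivity. Qed.

Lemma zsum_single (f : Z -> R) (j : Z) : (forall m, m <> j -> f m = 0) -> zsum f = f j.
Proof.
  intros Hf; unfold zsum; destruct (Z_le_gt_dec 0 j) as [Hj|Hj].
  - rewrite (Series_single _ (Z.to_nat j)) by (intros n Hn; apply Hf; lia).
    rewrite Series_zero by (intros n; apply Hf; lia).
    rewrite Z2Nat.id by lia; ring.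
  - rewrite Series_zero by (intros n; apply Hf; lia).
    rewrite (Series_single _ (Z.to_nat (- j - 1))) by (intros n Hn; apply Hf; lia).
    replace (- Z.of_nat (S (Z.to_nat (- j - 1))))%Z with j by lia; ring.
Qed.

Lemma rect_inside (x : R) : Rabs x < 1/2 -> rect x = 1.
Proof. intros Hx; unfold rect; destruct (Rlt_dec (Rabs x) (1/2)); [reflexivity|lra]. Qed.

Lemma rect_outside (x : R) : 1/2 < Rabs x -> rect x = 0.
Proof.
  intros Hx; unfold rect; destruct (Rlt_dec (Rabs x) (1/2)); [lra|].
  destruct (Req_EM_T (Rabs x) (1/2)); [lra|reflexivity].
Qed.

Lemma pulse_train_eval (T : R) (s beta : Z -> R) (j : Z) (x : R) :
  0 < T -> (forall m, s m = s j + 2 * (IZR m - IZR j) * T) -> Rabs (x - s j) < T ->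
  zsum (fun m => beta m * rect ((x - s m) / (2 * T))) = beta j.
Proof.
  intros HT Hs Hx.
  assert (Hscale : forall y, Rabs (y / (2 * T)) = Rabs y / (2 * T)).
  { intro y; rewrite Rabs_div by lra; rewrite (Rabs_right (2 * T)) by lra; reflexivity. }
  rewrite (zsum_single _ j).
  - rewrite rect_inside; [ring|].
    rewrite Hscale; apply Rmult_lt_reg_r with (2 * T); [lra|]; field_simplify; lra.
  - intros m Hm; rewrite rect_outside; [ring|].
    rewrite Hscale; apply Rmult_lt_reg_r with (2 * T); [lra|]; field_simplify; [|lra].
    rewrite Hs; apply Rabs_def2 in Hx.
    destruct (Z_lt_ge_dec m j) as [Hmj|Hmj].
    + assert (IZR m <= IZR j - 1) by (rewrite <- minus_IZR; apply IZR_le; lia).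
      rewrite Rabs_right; nra.
    + assert (IZR j + 1 <= IZR m) by (rewrite <- plus_IZR; apply IZR_le; lia).
      rewrite Rabs_left; nra.
Qed.

Lemma bI_eval (T : R) (beta : Z -> R) (j : Z) (x : R) :
  0 < T -> (2 * IZR j - 1) * T < x < (2 * IZR j + 1) * T -> bI T beta x = beta j.
Proof.
  intros HT Hx; apply (pulse_train_eval T (fun m => 2 * IZR m * T)); [exact HT | intro m; ring |].
  apply Rabs_def1; lra.
Qed.

Lemma bQ_eq_bI (T : R) (beta : Z -> R) (x : R) : bQ T beta x = bI T beta (x - T).
Proof. apply zsum_ext; intro m; do 3 f_equal; ring. Qed.

Lemma floor_div_decomp (T x : R) :
  0 < T -> 0 <= x - 2 * IZR (floorZ (x / (2 * T))) * T < 2 * T.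
Proof.
  intros HT; destruct (base_Int_part (x / (2 * T))) as [Hlo Hhi]; unfold floorZ.
  set (n := IZR (Int_part (x / (2 * T)))) in *.
  assert (Hx : x = x / (2 * T) * (2 * T)) by (field; lra).
  split; nra.
Qed.

Lemma sin_odd_mult_PI (j : Z) : sin ((2 * IZR j + 1) * PI) = 0.
Proof. apply sin_eq_0_1; exists (2 * j + 1)%Z; rewrite plus_IZR, mult_IZR; reflexivity. Qed.

Lemma cos_odd_mult_PI (j : Z) : cos ((2 * IZR j + 1) * PI) = -1.
Proof.
  replace ((2 * IZR j + 1) * PI) with (2 * (IZR j * PI) + PI) by ring.
  rewrite neg_cos, cos_2a_sin, (sin_eq_0_1 (IZR j * PI)) by (exists j; reflexivity); ring.
Qed.

Lemma sin_odd_mult_PI_add (j : Z) (x : R) : sin ((2 * IZR j + 1) * PI + x) = - sin x.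
Proof. rewrite sin_plus, sin_odd_mult_PI, cos_odd_mult_PI; ring. Qed.

Lemma sin_odd_mult_PI_sub (j : Z) (x : R) : sin ((2 * IZR j + 1) * PI - x) = sin x.
Proof. rewrite sin_minus, sin_odd_mult_PI, cos_odd_mult_PI; ring. Qed.

(* A primitive of cos(w t) cos(w (t - tau)) = (cos(w tau) + cos(2 w t - w tau)) / 2. *)
Definition cos_cos_prim (w tau t : R) : R :=
  t * cos (w * tau) / 2 + sin (2 * w * t - w * tau) / (4 * w).

Lemma is_RInt_cos_cos (w tau a b : R) : w <> 0 ->
  is_RInt (fun t => cos (w * t) * cos (w * (t - tau))) a b
    (cos_cos_prim w tau b - cos_cos_prim w tau a).
Proof.
  intros Hw; apply (is_RInt_derive (cos_cos_prim w tau)).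
  - intros t _; unfold cos_cos_prim; auto_derive; [auto|].
    replace (w * (t - tau)) with (w * t - w * tau) by ring.
    replace (2 * w * t + - (w * tau)) with (w * t + (w * t - w * tau)) by ring.
    replace (w * tau) with (w * t - (w * t - w * tau)) at 1 by ring.
    rewrite cos_plus, cos_minus; field; exact Hw.
  - intros t _; apply (ex_derive_continuous (K := R_AbsRing) (V := R_NormedModule)).
    auto_derive; auto.
Qed.

Lemma is_RInt_step_mul (g G b : R -> R) (a m c p q : R) :
  (forall u v, is_RInt g u v (G v - G u)) -> a <= m <= c ->
  (forall t, a < t < m -> b t = p) -> (forall t, m < t < c -> b t = q) ->
  is_RInt (fun t => b t * g t) a c (p * (G m - G a) + q * (G c - G m)).
Proof.
  intros Hg Hm Hp Hq.
  apply (is_RInt_Chasles _ a m c (p * (G m - G a)) (q * (G c - G m))).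
  - apply (is_RInt_ext (fun t => scal p (g t))); [|exact (is_RInt_scal _ _ _ _ _ (Hg a m))].
    rewrite Rmin_left, Rmax_right by lra; intros t Ht; rewrite Hp by exact Ht; reflexivity.
  - apply (is_RInt_ext (fun t => scal q (g t))); [|exact (is_RInt_scal _ _ _ _ _ (Hg m c))].
    rewrite Rmin_left, Rmax_right by lra; intros t Ht; rewrite Hq by exact Ht; reflexivity.
Qed.

Lemma inphase_correlation (T tau : R) (beta : Z -> R) (n k : Z) :
  0 < T -> 0 <= tau - 2 * IZR n * T < 2 * T ->
  let w := omega_p T in
  let u := tau - 2 * IZR n * T in
  is_RInt (fun t => bI T beta (t - tau) * (cos (w * t) * cos (w * (t - tau))))
    ((2 * IZR k - 1) * T) ((2 * IZR k + 1) * T)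
    ((cos (w * tau) * (u * beta (k - n - 1)%Z + (2 * T - u) * beta (k - n)%Z)
      - 2 * T / PI * sin (w * tau) * (beta (k - n - 1)%Z - beta (k - n)%Z)) / 2).
Proof.
  intros HT Hu w u; fold u in Hu.
  assert (HPI : 0 < PI) by apply PI_RGT_0.
  assert (HwT : w * T = PI / 2) by (unfold w, omega_p; field; lra).
  set (t0 := (2 * IZR k - 1) * T); set (t2 := (2 * IZR k + 1) * T).
  set (P := cos_cos_prim w tau).
  assert (Hjump_lo : 2 * w * t0 - w * tau = (2 * IZR (k - 1) + 1) * PI - w * tau)
    by (unfold t0; rewrite minus_IZR; nra).
  assert (Hjump_hi : 2 * w * t2 - w * tau = (2 * IZR k + 1) * PI - w * tau)
    by (unfold t2; nra).
  assert (Hjump : 2 * w * (t0 + u) - w * tau = (2 * IZR (k - n - 1) + 1) * PI + w * tau)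
    by (unfold t0, u; rewrite !minus_IZR; nra).
  replace (_ / 2) with (beta (k - n - 1)%Z * (P (t0 + u) - P t0)
                        + beta (k - n)%Z * (P t2 - P (t0 + u))).
  - apply is_RInt_step_mul.
    + intros a b; apply is_RInt_cos_cos; nra.
    + unfold t0, t2; lra.
    + intros t Ht; apply bI_eval; [exact HT|]; unfold t0, u in *; rewrite !minus_IZR; lra.
    + intros t Ht; apply bI_eval; [exact HT|]; unfold t0, t2, u in *; rewrite !minus_IZR; lra.
  - unfold P, cos_cos_prim.
    rewrite Hjump_lo, Hjump_hi, Hjump, sin_odd_mult_PI_add, !sin_odd_mult_PI_sub.
    unfold t0, t2, w, omega_p; field; lra.
Qed.

Lemma quadrature_correlation (T tau : R) (beta : Z -> R) (n k : Z) :
  0 < T -> 0 <= tau + T - 2 * IZR n * T < 2 * T ->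
  let w := omega_p T in
  let u := tau + T - 2 * IZR n * T in
  is_RInt (fun t => bQ T beta (t - tau) * (cos (w * t) * sin (w * (t - tau))))
    ((2 * IZR k - 1) * T) ((2 * IZR k + 1) * T)
    ((- sin (w * tau) * (u * beta (k - n - 1)%Z + (2 * T - u) * beta (k - n)%Z)
      - 2 * T / PI * cos (w * tau) * (beta (k - n - 1)%Z - beta (k - n)%Z)) / 2).
Proof.
  intros HT Hu w u.
  assert (HwT : w * T = PI / 2) by (unfold w, omega_p; field; lra).
  assert (Hcos : cos (w * (tau + T)) = - sin (w * tau)).
  { replace (w * (tau + T)) with (w * tau + PI / 2) by lra.
    rewrite cos_plus, cos_PI2, sin_PI2; ring. }
  assert (Hsin : sin (w * (tau + T)) = cos (w * tau)).
  { replace (w * (tau + T)) with (w * tau + PI / 2) by lra.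
    rewrite sin_plus, cos_PI2, sin_PI2; ring. }
  pose proof (inphase_correlation T (tau + T) beta n k HT Hu) as Hin; cbv zeta in Hin.
  fold w u in Hin; rewrite Hcos, Hsin in Hin.
  refine (is_RInt_ext _ _ _ _ _ _ Hin); intros t _.
  replace (w * (t - (tau + T))) with (w * (t - tau) - PI / 2) by lra.
  rewrite bQ_eq_bI, cos_minus, cos_PI2, sin_PI2.
  replace (t - tau - T) with (t - (tau + T)) by ring.
  rewrite Rmult_0_r, Rmult_1_r, Rplus_0_l; reflexivity.
Qed.

Lemma RInt_LP_prod (T wc Au tau phic : R) (betaI betaQ : Z -> R) (a b VI VQ : R) :
  T <> 0 ->
  let w := omega_p T in
  is_RInt (fun t => bI T betaI (t - tau) * (cos (w * t) * cos (w * (t - tau)))) a b VI ->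
  is_RInt (fun t => bQ T betaQ (t - tau) * (cos (w * t) * sin (w * (t - tau)))) a b VQ ->
  RInt (LP_prod T wc Au tau phic betaI betaQ) a b = Au / T * (cos phic * VI + sin phic * VQ).
Proof.
  intros HT w HI HQ.
  pose proof (is_RInt_scal _ _ _ (Au / T) _
    (is_RInt_plus _ _ _ _ _ _ (is_RInt_scal _ _ _ (cos phic) _ HI)
                              (is_RInt_scal _ _ _ (sin phic) _ HQ))) as Hsum.
  apply is_RInt_unique; refine (is_RInt_ext _ _ _ _ _ _ Hsum).
  intros t _; unfold LP_prod, lp_part, scal, plus; simpl; unfold mult; simpl; fold w.
  match goal with |- ?x = ?y => change (@eq R x y) end; field; exact HT.
Qed.

Theorem theorem1 (T wc Au tau phic : R) (betaI betaQ : Z -> R) (k : Z) :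
  0 < T -> 0 < wc -> 0 < Au ->
  (forall m : Z, betaI m = 1 \/ betaI m = -1) ->
  (forall m : Z, betaQ m = 1 \/ betaQ m = -1) ->
  let phip := omega_p T * tau in
  let k' := (k - floorZ (tau / (2 * T)))%Z in
  let tau_u := tau - 2 * IZR (floorZ (tau / (2 * T))) * T in
  let kQ' := (k - floorZ ((tau + T) / (2 * T)))%Z in
  let tauQ_u := tau + T - 2 * IZR (floorZ ((tau + T) / (2 * T))) * T in
  LambdaI T wc Au tau phic betaI betaQ k =
  Au / (2 * T) *
  ( cos phic *
      ( cos phip * (tau_u * betaI (k' - 1)%Z + (2 * T - tau_u) * betaI k')
        - 2 * T / PI * sin phip * (betaI (k' - 1)%Z - betaI k') )
    - sin phic *
      ( sin phip * (tauQ_u * betaQ (kQ' - 1)%Z + (2 * T - tauQ_u) * betaQ kQ')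
        + 2 * T / PI * cos phip * (betaQ (kQ' - 1)%Z - betaQ kQ') ) ).
Proof.
  (* The identity is linear in the bits and holds for any carrier and amplitude. *)
  intros HT _ _ _ _; cbv zeta.
  unfold LambdaI; rewrite (RInt_LP_prod T wc Au tau phic betaI betaQ _ _ _ _ (Rgt_not_eq _ _ HT)
    (inphase_correlation T tau betaI _ k HT (floor_div_decomp T tau HT))
    (quadrature_correlation T tau betaQ _ k HT (floor_div_decomp T (tau + T) HT))).
  field; split; [apply PI_neq0 | lra].
Qed.
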